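(* Fix integers $N\ge 2$ and $K\ge 1$. The class $M^{\text{DISTMULT}}$ is not universal, i.e. $\pi(\mathcal{M}^{\text{DISTMULT}})\ne\pi(\mathbb{R}^{N\times N\times K})$.
   Context: There are $N$ entities and $K$ relations. A score-based model assigns a score $s_k(i,j)\in\mathbb{R}$ to each triple, $i,j\in\{1,\dots,N\}$, $k\in\{1,\dots,K\}$; its scoring tensor $\mathcal{S}\in\mathbb{R}^{N\times N\times K}$ has frontal slices $\mathbf{S}_k$ with $[\mathbf{S}_k]_{ij}=s_k(i,j)$. For a real $N\times N$ matrix $\mathbf{S}$, $\pi(\mathbf{S})$ is the matrix of dense ranks: $\pi_{ij}(\mathbf{S})=1+$ (number of distinct values among entries of $\mathbf{S}$ strictly larger than $s_{ij}$). For tensors, $\pi$ acts slicewise; for a set $X$, $\pi(X)=\{\pi(x):x\in X\}$. DISTMULT of size $r$: parameters $\mathbf{A}\in\mathbb{R}^{N\times r}$ (rows $\mathbf{a}_i$), $\mathbf{R}\in\mathbb{R}^{K\times r}$ (rows $\mathbf{r}_k$), score $\mathbf{a}_i^T\mathrm{diag}(\mathbf{r}_k)\mathbf{a}_j$; $\mathcal{M}^{\text{DISTMULT}}$ is the set of scoring tensors of all DISTMULT models of all sizes $r\in\mathbb{N}^+$. *)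

From HB Require Import structures.
From mathcomp Require Import all_boot all_order all_algebra.
From mathcomp Require Import reals.
Set Implicit Arguments. Unset Strict Implicit. Unset Printing Implicit Defensive.
Import Order.TTheory GRing.Theory Num.Theory.
Local Open Scope ring_scope.

(* A scoring tensor in R^{N x N x K}: frontal slices S_k indexed by k : 'I_K. *)
Definition tensor (R : realType) (N K : nat) := {ffun 'I_K -> 'M[R]_N}.

Definition dense_rank_entry (R : realType) (N : nat) (S : 'M[R]_N) (i j : 'I_N) : nat :=
  (size (undup [seq v <- [seq S p q | p <- enum 'I_N, q <- enum 'I_N] | S i j < v])).+1.

Definition dense_rank (R : realType) (N : nat) (S : 'M[R]_N) : 'M[nat]_N :=
  \matrix_(i, j) dense_rank_entry S i j.

Definition pi_tensor (R : realType) (N K : nat) (T : tensor R N K) : {ffun 'I_K -> 'M[nat]_N} :=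
  [ffun k => dense_rank (T k)].

Definition pi_set (R : realType) (N K : nat) (X : tensor R N K -> Prop)
  : {ffun 'I_K -> 'M[nat]_N} -> Prop :=
  fun P => exists T, X T /\ P = pi_tensor T.

(* Scoring tensor of the DISTMULT model of size r with parameters A (N x r), Rm (K x r):
   s_k(i,j) = a_i^T diag(r_k) a_j. *)
Definition distmult_tensor (R : realType) (N K r : nat)
  (A : 'M[R]_(N, r)) (Rm : 'M[R]_(K, r)) : tensor R N K :=
  [ffun k => \matrix_(i, j) \sum_(l < r) A i l * Rm k l * A j l].

Definition M_distmult (R : realType) (N K : nat) : tensor R N K -> Prop :=
  fun T => exists r : nat, (0 < r)%N /\
    exists (A : 'M[R]_(N, r)) (Rm : 'M[R]_(K, r)), T = distmult_tensor A Rm.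

From mathcomp Require Import all_boot all_order all_algebra.
From mathcomp Require Import reals.
Set Implicit Arguments. Unset Strict Implicit. Unset Printing Implicit Defensive.
Import Order.TTheory GRing.Theory Num.Theory.
Local Open Scope ring_scope.

(* Every slice of a DISTMULT scoring tensor is symmetric, and dense ranks
   only depend on the value of an entry, so every tensor in
   pi(M^DISTMULT) has symmetric slices.  The tensor whose slices all equal
   the matrix unit E_{01} has dense rank 1 at (0,1) but a larger one at (1,0). *)

Section DenseRank.

Variables (R : realType) (N : nat).
Implicit Types (S : 'M[R]_N) (i j p q : 'I_N).

Lemma dense_rank_entry_eq S i j p q :
  S i j = S p q -> dense_rank_entry S i j = dense_rank_entry S p q.
Proof. by rewrite /dense_rank_entry => ->. Qed.

Lemma dense_rank_sym S i j :
  (forall p q, S p q = S q p) -> dense_rank S i j = dense_rank S j i.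
Proof. by move=> symS; rewrite !mxE; apply: dense_rank_entry_eq. Qed.

Lemma dense_rank_entry_max S i j :
  (forall p q, S p q <= S i j) -> dense_rank_entry S i j = 1%N.
Proof.
move=> Smax; rewrite /dense_rank_entry.
suff -> : [seq v <- [seq S p q | p <- enum 'I_N, q <- enum 'I_N] | S i j < v] = [::]
  by [].
apply/eqP; rewrite -size_eq0 size_filter -leqn0 leqNgt -has_count.
by apply/hasPn => _ /allpairsP[[p q] [_ _ ->]]; rewrite /= ltNge Smax.
Qed.

Lemma dense_rank_entry_gt1 S i j p q :
  S i j < S p q -> (1 < dense_rank_entry S i j)%N.
Proof.
move=> lt_ij_pq; rewrite /dense_rank_entry ltnS lt0n size_eq0.
apply/eqP => undup_nil.
have : S p q \in undup [seq v <- [seq S p q | p <- enum 'I_N, q <- enum 'I_N]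
                        | S i j < v].
  by rewrite mem_undup mem_filter lt_ij_pq; apply/allpairsP; exists (p, q);
    rewrite !mem_enum.
by rewrite undup_nil.
Qed.

End DenseRank.

Lemma distmult_tensor_sym (R : realType) (N K r : nat)
    (A : 'M[R]_(N, r)) (Rm : 'M[R]_(K, r)) k i j :
  distmult_tensor A Rm k i j = distmult_tensor A Rm k j i.
Proof.
rewrite ffunE !mxE; apply: eq_bigr => l _.
by rewrite mulrC [A i l * _]mulrC mulrA.
Qed.

Lemma pi_distmult_sym (R : realType) (N K : nat) P k (i j : 'I_N) :
  pi_set (@M_distmult R N K) P -> P k i j = P k j i.
Proof.
move=> [_ [[r [_ [A [Rm ->]]]] ->]]; rewrite ![pi_tensor _ _]ffunE.
by apply: dense_rank_sym => p q; apply: distmult_tensor_sym.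
Qed.

Theorem theorem8 (R : realType) (N K : nat) (hN : (2 <= N)%N) (hK : (1 <= K)%N) :
  pi_set (@M_distmult R N K) <> pi_set (fun _ : tensor R N K => True).
Proof.
move=> piE.
pose i0 : 'I_N := Ordinal (ltnW hN).
pose i1 : 'I_N := Ordinal hN.
pose E01 : 'M[R]_N := delta_mx i0 i1.
pose T : tensor R N K := [ffun => E01].
have piT : pi_set (@M_distmult R N K) (pi_tensor T) by rewrite piE; exists T.
have E01_max p q : E01 p q <= E01 i0 i1.
  by rewrite !mxE !eqxx ler_nat leq_b1.
have E01_lt : E01 i1 i0 < E01 i0 i1 by rewrite !mxE !eqxx /= ltr01.
have := pi_distmult_sym (Ordinal hK) i0 i1 piT.
rewrite !ffunE ![dense_rank _ _ _]mxE (dense_rank_entry_max E01_max) => /esym rank1.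
by have := dense_rank_entry_gt1 E01_lt; rewrite rank1.
Qed.
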